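(* Let $\mathbf{X}\in\mathbb{R}^{m\times n}_+$ be a nonnegative matrix with no zero row and no zero column, and let $\mathbf{x}_1,\dots,\mathbf{x}_m\in\mathbb{R}^n_+$ be the columns of $\mathbf{X}^\top$ (the rows of $\mathbf{X}$). Let $\mathbf{U}^\star=[\mathbf{u}_1,\dots,\mathbf{u}_c]\in\mathbb{R}^{n\times c}$ be the matrix whose columns are generators of the (pairwise distinct) extreme rays of $\operatorname{cone}(\mathbf{X}^\top)$, and let $\boldsymbol{\mu}=\frac{1}{m}\sum_{i=1}^m\mathbf{x}_i$. If $c\ge 2$, then for every $k\in\{1,\dots,c\}$ there is no scalar $\tau$ with $\boldsymbol{\mu}=\tau\,\mathbf{u}_k$; i.e. no extreme ray of $\operatorname{cone}(\mathbf{X}^\top)$ is colinear with the mean $\boldsymbol{\mu}$.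
   Context: $\operatorname{cone}(\mathbf{X}^\top):=\{\mathbf{X}^\top\boldsymbol{\alpha}:\boldsymbol{\alpha}\ge 0\}\subseteq\mathbb{R}^n$. A ray $\mathbb{R}_+\mathbf{u}\subseteq\operatorname{cone}(\mathbf{X}^\top)$ (with $\mathbf{u}\neq 0$) is extreme if whenever $\mathbf{u}=\mathbf{v}+\mathbf{w}$ with $\mathbf{v},\mathbf{w}\in\operatorname{cone}(\mathbf{X}^\top)$, then $\mathbf{v}=a\mathbf{u}$ and $\mathbf{w}=b\mathbf{u}$ for some $a,b\ge 0$. *)

From HB Require Import structures.
From mathcomp Require Import all_boot all_order all_algebra.
Set Implicit Arguments. Unset Strict Implicit. Unset Printing Implicit Defensive.
Import Order.TTheory GRing.Theory Num.Theory.
Local Open Scope ring_scope.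

(* The rows of
   X : 'M_(m,n) are the x_i = columns of X^T.
   cone(X^T) = { X^T alpha : alpha >= 0 }; as row vectors this is
   { alpha *m X : alpha : 'rV_m, alpha >= 0 entrywise }. *)
Definition in_cone (R : realFieldType) (m n : nat) (X : 'M[R]_(m, n))
  (v : 'rV[R]_n) : Prop :=
  exists alpha : 'rV[R]_m, (forall i, 0 <= alpha 0 i) /\ v = alpha *m X.

Definition extreme_ray (R : realFieldType) (m n : nat) (X : 'M[R]_(m, n))
  (u : 'rV[R]_n) : Prop :=
  u != 0 /\ in_cone X u /\
  forall v w, in_cone X v -> in_cone X w -> u = v + w ->
    exists a b : R, [/\ 0 <= a, 0 <= b, v = a *: u & w = b *: u].

Definition same_ray (R : realFieldType) (n : nat) (u u' : 'rV[R]_n) : Prop :=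
  exists a : R, 0 < a /\ u' = a *: u.

Definition row_mean (R : realFieldType) (m n : nat) (X : 'M[R]_(m, n)) : 'rV[R]_n :=
  (m%:R)^-1 *: \sum_(i < m) row i X.

From HB Require Import structures.
From mathcomp Require Import all_boot all_order all_algebra.
Import Order.TTheory GRing.Theory Num.Theory.
Local Open Scope ring_scope.

(* If the mean mu = tau u of the rows lies on an extreme ray R_+ u, then
   tau > 0 because the rows are nonnegative and not all zero, so u is a
   combination of the rows with strictly positive weights.  Splitting off
   one row at a time and using extremality puts every row, hence the whole
   cone, on the ray R_+ u; so it is the only extreme ray, which contradicts
   c >= 2. *)

Section ConeOfRows.

Set Implicit Arguments.
Unset Strict Implicit.

Variables (R : realFieldType) (m n : nat) (X : 'M[R]_(m, n)).

Lemma row_meanE : row_mean X = const_mx (m%:R^-1) *m X.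
Proof.
apply/rowP => j; rewrite !mxE summxE mulr_sumr.
by apply: eq_bigr => i _; rewrite !mxE.
Qed.

Lemma in_cone_on_ray (u v : 'rV[R]_n) :
  (forall i, exists a, 0 <= a /\ row i X = a *: u) ->
  in_cone X v -> exists b, 0 <= b /\ v = b *: u.
Proof.
move=> /fin_all_exists[a rowXE] [beta [beta_ge0 ->]].
exists (\sum_i beta 0 i * a i); split.
  by apply: sumr_ge0 => i _; rewrite mulr_ge0 //; case: (rowXE i).
rewrite mulmx_sum_row scaler_suml; apply: eq_bigr => i _.
by have [_ ->] := rowXE i; rewrite scalerA.
Qed.

Lemma interior_extreme_ray_rows (u : 'rV[R]_n) (alpha : 'rV[R]_m) :
  extreme_ray X u -> u = alpha *m X -> (forall i, 0 < alpha 0 i) ->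
  forall i, exists a, 0 <= a /\ row i X = a *: u.
Proof.
move=> [_ [_ u_extreme]] uE alpha_gt0 i.
pose alpha_i := alpha 0 i *: 'e_i : 'rV[R]_m.
have head_in_cone : in_cone X (alpha_i *m X).
  by exists alpha_i; split => // j; rewrite !mxE mulr_ge0 ?ler0n // ltW.
have rest_in_cone : in_cone X ((alpha - alpha_i) *m X).
  exists (alpha - alpha_i); split => // j.
  rewrite !mxE eqxx /=; case: eqP => [->|_]; first by rewrite mulr1 subrr.
  by rewrite mulr0 subr0 ltW.
have split_u : u = alpha_i *m X + (alpha - alpha_i) *m X.
  by rewrite -mulmxDl addrC subrK.
have [a [_ [a_ge0 _ rowiE _]]] := u_extreme _ _ head_in_cone rest_in_cone split_u.
have coef_neq0 : alpha 0 i != 0 by rewrite gt_eqF.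
exists ((alpha 0 i)^-1 * a); split; first by rewrite mulr_ge0 // invr_ge0 ltW.
by rewrite -scalerA -rowiE -scalemxAl /alpha_i scalerA mulVf // scale1r rowE.
Qed.

Hypothesis X_ge0 : forall i j, 0 <= X i j.

Lemma in_cone_ge0 (v : 'rV[R]_n) j : in_cone X v -> 0 <= v 0 j.
Proof.
move=> [alpha [alpha_ge0 ->]]; rewrite mxE.
by apply: sumr_ge0 => i _; apply: mulr_ge0.
Qed.

Lemma row_mean_eq0 : row_mean X = 0 -> X = 0.
Proof.
move=> /rowP mean0; apply/matrixP => i j; rewrite mxE.
have m_gt0 : (0 < m)%N by apply: leq_ltn_trans (ltn_ord i).
have := mean0 j; rewrite !mxE summxE; under eq_bigr do rewrite mxE.
move=> /eqP; rewrite mulf_eq0 invr_eq0 pnatr_eq0 eqn0Ngt m_gt0 => /eqP sum0.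
exact: (psumr_eq0P _ sum0).
Qed.

Lemma extreme_ray_mean_gt0 (u : 'rV[R]_n) (tau : R) :
  extreme_ray X u -> row_mean X = tau *: u -> 0 < tau.
Proof.
move=> [u_neq0 [u_in_cone _]] meanE; rewrite ltNge; apply/negP => tau_le0.
have mean_in_cone : in_cone X (row_mean X).
  exists (const_mx m%:R^-1); split; last exact: row_meanE.
  by move=> i; rewrite mxE invr_ge0.
have mean0 : row_mean X = 0.
  apply/rowP => j; rewrite [RHS]mxE; apply/eqP.
  by rewrite eq_le in_cone_ge0 // andbT meanE mxE mulr_le0_ge0 // in_cone_ge0.
move: u_neq0 u_in_cone => /eqP + [alpha [_ uE]].
by rewrite uE (row_mean_eq0 mean0) mulmx0.
Qed.

Lemma mean_extreme_ray_unique (u u' : 'rV[R]_n) (tau : R) :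
  extreme_ray X u -> row_mean X = tau *: u -> extreme_ray X u' ->
  same_ray u u'.
Proof.
move=> u_extreme meanE [u'_neq0 [u'_in_cone _]].
have tau_gt0 := extreme_ray_mean_gt0 u_extreme meanE.
pose alpha : 'rV[R]_m := const_mx (tau^-1 * m%:R^-1).
have alpha_gt0 i : 0 < alpha 0 i.
  have m_gt0 : (0 < m)%N by apply: leq_ltn_trans (ltn_ord i).
  by rewrite mxE mulr_gt0 ?invr_gt0 ?ltr0n.
have uE : u = alpha *m X.
  rewrite -[alpha]scalemx_const -scalemxAl -row_meanE meanE scalerA.
  by rewrite mulVf ?scale1r ?gt_eqF.
have [b [b_ge0 u'E]] := in_cone_on_ray
  (interior_extreme_ray_rows u_extreme uE alpha_gt0) u'_in_cone.
exists b; split => //; rewrite lt_def b_ge0 andbT.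
by apply: contraNneq u'_neq0 => b0; rewrite u'E b0 scale0r.
Qed.

End ConeOfRows.

Lemma exists_ord_neq (c : nat) (k : 'I_c) : (1 < c)%N -> exists l : 'I_c, l != k.
Proof.
move=> c_gt1; exists (Ordinal (leq_ltn_trans (leq_b1 (val k == 0%N)) c_gt1)).
by apply/eqP => /(congr1 val) /=; case: eqP => [-> | /[swap] <-].
Qed.

Theorem lemma4p1 (R : realFieldType) (m n c : nat) (X : 'M[R]_(m, n))
  (U : 'I_c -> 'rV[R]_n) :
  (forall i j, 0 <= X i j) ->
  (forall i, row i X != 0) ->
  (forall j, col j X != 0) ->
  (* each U k generates an extreme ray *)
  (forall k, extreme_ray X (U k)) ->
  (* the rays are pairwise distinct *)
  (forall k l, k != l -> ~ same_ray (U k) (U l)) ->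
  (* every extreme ray is generated by some U k *)
  (forall u, extreme_ray X u -> exists k, same_ray (U k) u) ->
  (2 <= c)%N ->
  forall k : 'I_c, ~ exists tau : R, row_mean X = tau *: U k.
Proof.
(* The existence of an extreme ray already forces X != 0. *)
move=> X_ge0 _ _ U_extreme U_distinct _ c_ge2 k [tau meanE].
have [l l_neq_k] := exists_ord_neq k c_ge2.
apply: (U_distinct k l); first by rewrite eq_sym.
exact: (mean_extreme_ray_unique X_ge0 (U_extreme k) meanE (U_extreme l)).
Qed.
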